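(* Let $\Pi>0$ and $m$ be a positive integer. Consider MPR interfaces $R_1=\langle\Pi,\Theta_1,m'_1\rangle,\dots,R_p=\langle\Pi,\Theta_p,m'_p\rangle$ with positive integers $m'_i$ and $(m'_i-1)\Pi\le\Theta_i\le m'_i\Pi$. Transform each $R_i$ into the periodic task set consisting of $m'_i-1$ tasks $(\Pi,\Pi,\Pi)$ and one task $(\Pi,\Theta_i-(m'_i-1)\Pi,\Pi)$. Then McNaughton's algorithm successfully schedules the union of all transformed tasks on $m$ identical unit-capacity processors if and only if $$\sum_{i=1}^p\frac{\Theta_i}{\Pi}\le m.$$
   Context: A periodic task $(T,C,T)$ releases a job at every time $jT$, $j\ge0$. The job requires $C$ units of execution in $(jT,(j+1)T]$ and never executes on two processors simultaneously. McNaughton's algorithm, for periodic tasks all having period and deadline $T$, works in each window $(jT,(j+1)T]$ separately. It takes the jobs in a fixed order and fills processor $1$ from time $jT$. Whenever a processor $p$ is filled up to $(j+1)T$, the remainder of the current job is placed on processor $p+1$ starting at time $jT$, and so on. Success means that the schedule: - uses only processors $1,\dots,m$; - never runs a job on two processors simultaneously; - meets all deadlines. *)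

From HB Require Import structures.
From mathcomp Require Import all_boot all_order all_algebra.
From mathcomp Require Import reals.
Set Implicit Arguments. Unset Strict Implicit. Unset Printing Implicit Defensive.
Import Order.TTheory GRing.Theory Num.Theory.
Local Open Scope ring_scope.

Section McNaughton.
Variable R : realType.

Definition psum (cs : seq R) (k : nat) : R := \sum_(i < k) nth 0 cs i.

(* McNaughton's wrap-around schedule for implicit-deadline tasks all with
   period/deadline T and execution demands cs (in this order).
   mcn_runs T cs k p s : the job of task k (0-based index in cs) released in
   the window (jT,(j+1)T] containing time s runs on processor p (1-based) at
   time s.  Processor p is filled with the portion ((p-1)T, pT] of the
   "unrolled" line on which the jobs are laid out consecutively: job k occupies
   (psum k, psum (k+1)]. This is exactly: fill processor 1 from jT, and when
   processor p is filled up to (j+1)T, continue on processor p+1 from jT. *)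
Definition mcn_runs (T : R) (cs : seq R) (k p : nat) (s : R) : Prop :=
  (k < size cs)%N /\ (1 <= p)%N /\
  exists j : nat, j%:R * T < s <= j.+1%:R * T /\
    psum cs k < (p.-1)%:R * T + (s - j%:R * T) <= psum cs k.+1.

(* Amount of execution that a job of task k receives on processor p within
   its window (length of ((p-1)T, pT] ∩ (psum k, psum (k+1)]). *)
Definition mcn_amount (T : R) (cs : seq R) (k p : nat) : R :=
  Num.max 0 (Num.min (p%:R * T) (psum cs k.+1) - Num.max ((p.-1)%:R * T) (psum cs k)).

Definition mcn_success (T : R) (m : nat) (cs : seq R) : Prop :=
  (forall k p s, mcn_runs T cs k p s -> (p <= m)%N) /\
  (forall k p1 p2 s, mcn_runs T cs k p1 s -> mcn_runs T cs k p2 s -> p1 = p2) /\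
  (* meets all deadlines: every job gets its C units within its window
     on processors 1..m *)
  (forall k, (k < size cs)%N -> \sum_(1 <= p < m.+1) mcn_amount T cs k p = nth 0 cs k).

Definition mpr_transform (Pi Theta : R) (m' : nat) : seq R :=
  nseq m'.-1 Pi ++ [:: Theta - (m'.-1)%:R * Pi].

Definition mpr_union (Pi : R) (pn : nat) (Theta : nat -> R) (mp : nat -> nat) : seq R :=
  flatten [seq mpr_transform Pi (Theta i) (mp i) | i <- iota 0 pn].

End McNaughton.

(* Lay the demands end to end on a line; McNaughton's algorithm cuts the line
   into consecutive pieces of length Pi, one per processor.  Each transformed
   demand is at most Pi, so a job spans at most two consecutive pieces, and
   these are used at disjoint offsets of the window: no job ever runs in
   parallel.  Hence the only possible failure is running out of processors,
   i.e. the schedule succeeds iff the total demand, which equals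
   sum_i Theta_i, fits into m windows of length Pi. *)
From HB Require Import structures.
From mathcomp Require Import all_boot all_order all_algebra.
From mathcomp Require Import reals.
From mathcomp Require Import lra.
Import Order.TTheory GRing.Theory Num.Theory.
Local Open Scope ring_scope.

Ltac case_minmax := repeat match goal with
 | |- context [Num.min ?x ?y] => case: (leP x y)
 | |- context [Num.max ?x ?y] => case: (leP x y)
 end; intros.

Lemma mulr_natS (R : pzSemiRingType) (n : nat) (x : R) : n.+1%:R * x = n%:R * x + x.
Proof. by rewrite mulrSr mulrDl mul1r. Qed.

Lemma leq_of_mulrn_lt (R : realFieldType) (T : R) (u v : nat) :
  0 < T -> u%:R * T < v%:R * T + T -> (u <= v)%N.
Proof.
move=> hT huv; rewrite leqNgt; apply/negP => hvu.
have : v.+1%:R * T <= u%:R * T by rewrite ler_pM2r // ler_nat.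
by rewrite mulr_natS; lra.
Qed.

Lemma eq_of_mulrn_near (R : realFieldType) (T : R) (u v : nat) :
  0 < T -> u%:R * T < v%:R * T + T -> v%:R * T < u%:R * T + T -> u = v.
Proof.
by move=> hT huv hvu; apply/anti_leq/andP; split; exact: leq_of_mulrn_lt hT _.
Qed.

Lemma sum_overlap_tiles (R : realFieldType) (T a b : R) (m : nat) :
  0 <= T -> 0 <= a -> a <= b ->
  \sum_(1 <= p < m.+1) Num.max 0 (Num.min (p%:R * T) b - Num.max ((p.-1)%:R * T) a)
  = Num.max 0 (Num.min (m%:R * T) b - a).
Proof.
move=> hT ha hab; elim: m => [|m IH].
  by rewrite big_geq // mul0r; case_minmax; lra.
rewrite big_nat_recr //= IH mulr_natS.
have : 0 <= m%:R * T by apply: mulr_ge0.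
set X := m%:R * T => hX.
by case_minmax; lra.
Qed.

Section PrefixSums.
Context {R : realType}.
Implicit Types (cs : seq R) (k : nat).

Lemma psumS cs k : psum cs k.+1 = psum cs k + nth 0 cs k.
Proof. by rewrite /psum big_ord_recr. Qed.

Lemma psum_size cs : psum cs (size cs) = \sum_(x <- cs) x.
Proof. by rewrite (big_nth 0) big_mkord. Qed.

Lemma psum_ge0 cs k : (forall i, 0 <= nth 0 cs i) -> 0 <= psum cs k.
Proof. by move=> h; apply: sumr_ge0. Qed.

Lemma psum_le_size cs k :
  (forall i, 0 <= nth 0 cs i) -> (k <= size cs)%N -> psum cs k <= psum cs (size cs).
Proof.
move=> h /subnK <-; elim: (size cs - k)%N => [|d IH] //.
by rewrite addSn psumS; have := h (d + k)%N; lra.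
Qed.

End PrefixSums.

Section McNaughtonBoundedDemands.
Variables (R : realType) (T : R) (cs : seq R).
Hypothesis hT : 0 < T.
Hypothesis demand_bounded : forall x, x \in cs -> 0 <= x <= T.

Lemma nth_demand_bounded i : 0 <= nth 0 cs i <= T.
Proof.
case: (ltnP i (size cs)) => hi; first exact/demand_bounded/mem_nth.
by rewrite nth_default // lexx ltW.
Qed.

Let nth_ge0 i : 0 <= nth 0 cs i.
Proof. by case/andP: (nth_demand_bounded i). Qed.

Lemma mcn_amount_total m k :
  \sum_(1 <= p < m.+1) mcn_amount T cs k p
  = Num.max 0 (Num.min (m%:R * T) (psum cs k.+1) - psum cs k).
Proof.
rewrite /mcn_amount sum_overlap_tiles ?psum_ge0 //; first exact: ltW.
by rewrite psumS; have := nth_ge0 k; lra.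
Qed.

Lemma mcn_runs_proc_lt_psum {k p s} :
  mcn_runs T cs k p s -> (p.-1)%:R * T < psum cs k.+1.
Proof.
case=> _ [_ [j [/andP [hs1 hs2] /andP [_ hx]]]].
by move: hs2; rewrite mulr_natS; lra.
Qed.

Lemma mcn_runs_unique k p1 p2 s :
  mcn_runs T cs k p1 s -> mcn_runs T cs k p2 s -> p1 = p2.
Proof.
case=> _ [hp1 [j1 [/andP [hs1 hs2] /andP [hx1 hx2]]]].
case=> _ [hp2 [j2 [/andP [hs1' hs2'] /andP [hx1' hx2']]]].
move: hs2 hs2'; rewrite !mulr_natS => hs2 hs2'.
have ej : j1 = j2 by apply: eq_of_mulrn_near hT _ _; lra.
subst j2; move: hx2 hx2'; rewrite psumS => hx2 hx2'.
have /andP [_ hck] := nth_demand_bounded k.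
have ep : p1.-1 = p2.-1 by apply: eq_of_mulrn_near hT _ _; lra.
by rewrite -(prednK hp1) -(prednK hp2) ep.
Qed.

Lemma psum_le_of_mcn_success m :
  mcn_success T m cs -> psum cs (size cs) <= m%:R * T.
Proof.
case=> _ [_ deadlines].
have hmT : 0 <= m%:R * T := mulr_ge0 (ler0n _ m) (ltW hT).
suff : forall k, (k <= size cs)%N -> psum cs k <= m%:R * T by apply.
elim => [|k IH] hk; first by rewrite /psum big_ord0.
have := deadlines k hk; rewrite mcn_amount_total psumS.
move: (IH (ltnW hk)) (psum_ge0 cs k nth_ge0) (nth_demand_bounded k) => h1 h2 /andP [h3 h4].
by case_minmax; lra.
Qed.

Lemma mcn_success_of_psum_le m :
  psum cs (size cs) <= m%:R * T -> mcn_success T m cs.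
Proof.
move=> htotal; split; [|split].
- move=> k p s hrun; have hk : (k < size cs)%N by case: hrun.
  have := mcn_runs_proc_lt_psum hrun; have := psum_le_size cs k.+1 nth_ge0 hk.
  move=> hle hwin; have : (p.-1)%:R * T < m%:R * T by lra.
  by rewrite ltr_pM2r // ltr_nat; case: p {hrun hwin}.
- exact: mcn_runs_unique.
- move=> k hk; rewrite mcn_amount_total.
  have := psum_le_size cs k.+1 nth_ge0 hk; rewrite psumS.
  move: (psum_ge0 cs k nth_ge0) (nth_demand_bounded k) => h1 /andP [h2 h3].
  by case_minmax; lra.
Qed.

Lemma mcn_successE m : mcn_success T m cs <-> psum cs (size cs) <= m%:R * T.
Proof. by split; [exact: psum_le_of_mcn_success | exact: mcn_success_of_psum_le]. Qed.

End McNaughtonBoundedDemands.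

Section MPRTransform.
Variables (R : realType) (Pi : R).

Lemma sum_mpr_transform Theta m' : \sum_(x <- mpr_transform Pi Theta m') x = Theta.
Proof.
rewrite /mpr_transform big_cat big_seq1 big_nseq iter_addr_0 /=.
by rewrite mulr_natl addrCA subrr addr0.
Qed.

Lemma mpr_transform_bounded Theta m' x :
  0 <= Pi -> (0 < m')%N -> (m'.-1)%:R * Pi <= Theta <= m'%:R * Pi ->
  x \in mpr_transform Pi Theta m' -> 0 <= x <= Pi.
Proof.
move=> hPi hm' /andP [hlo hhi]; rewrite mem_cat mem_seq1.
case/orP => [/nseqP [-> _] | /eqP ->]; first by rewrite hPi lexx.
move: hhi; rewrite -(prednK hm') mulr_natS => hhi.
by apply/andP; split; lra.
Qed.

Lemma sum_mpr_union pn Theta mp :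
  \sum_(x <- mpr_union Pi pn Theta mp) x = \sum_(i < pn) Theta i.
Proof.
rewrite /mpr_union big_flatten big_map -(big_mkord xpredT) /index_iota subn0.
by apply: eq_bigr => i _; rewrite sum_mpr_transform.
Qed.

End MPRTransform.

Theorem theorem5 (R : realType) (Pi : R) (m pn : nat) (Theta : nat -> R) (mp : nat -> nat)
  (hPi : 0 < Pi) (hm : (0 < m)%N)
  (hmp : forall i, (i < pn)%N -> (0 < mp i)%N)
  (hlo : forall i, (i < pn)%N -> (mp i).-1%:R * Pi <= Theta i)
  (hhi : forall i, (i < pn)%N -> Theta i <= (mp i)%:R * Pi)
  (cs : seq R) (hcs : perm_eq cs (mpr_union Pi pn Theta mp)) :
  mcn_success Pi m cs <-> \sum_(i < pn) Theta i / Pi <= m%:R.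
Proof.
have demand_bounded x : x \in cs -> 0 <= x <= Pi.
  rewrite (perm_mem hcs) => /flatten_mapP [i]; rewrite mem_iota add0n => /andP [_ hi].
  by apply: mpr_transform_bounded (ltW hPi) (hmp i hi) _; rewrite hlo ?hhi.
have total : psum cs (size cs) = \sum_(i < pn) Theta i.
  by rewrite psum_size (perm_big _ hcs) sum_mpr_union.
by rewrite mcn_successE // total -mulr_suml ler_pdivrMr.
Qed.
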